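(* Let $k$ be a field, $V$ a $k$-vector space and $\varphi,\psi\in\mathrm{End}_k(V)$ finite potent endomorphisms such that the commutator $\varphi\psi-\psi\varphi$ has finite rank. Then $\varphi+\psi$ is finite potent.
   Context: An endomorphism $\varphi$ of $V$ is finite potent if $\varphi^nV$ is finite dimensional for some $n$. *)

From mathcomp Require Import all_boot all_order all_algebra.
Set Implicit Arguments. Unset Strict Implicit. Unset Printing Implicit Defensive.
Import GRing.Theory.
Local Open Scope ring_scope.

Definition in_span (k : fieldType) (V : lmodType k) (s : seq V) (v : V) : Prop :=
  exists c : 'I_(size s) -> k, v = \sum_(i < size s) c i *: s`_i.

Definition fin_dim_range (k : fieldType) (V : lmodType k) (f : V -> V) : Prop :=
  exists s : seq V, forall v : V, (exists w : V, v = f w) <-> in_span s v.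

Definition finite_potent (k : fieldType) (V : lmodType k) (f : V -> V) : Prop :=
  exists n : nat, fin_dim_range (iter n f).

From mathcomp Require Import all_boot all_order all_algebra.
From mathcomp Require Import zify.
From Stdlib Require Import Classical.
Set Implicit Arguments. Unset Strict Implicit. Unset Printing Implicit Defensive.
Import GRing.Theory.
Local Open Scope ring_scope.

(* Work modulo operators of finite rank, which are closed under sums and under
   composition on either side.  Put X = phi + psi and let phi^N, psi^N have finite
   rank.  Since [X, phi] = psi phi - phi psi has finite rank, so has [X^m, phi] for
   every m, and the identity
     phi^a X^(m+1) psi^b
       = phi^(a+1) X^m psi^b + phi^a [X^m, phi] psi^b + phi^a X^m psi^(b+1)
   shows by induction on m that phi^a X^m psi^b has finite rank whenever
   a + b + m >= 2N - 1: for m = 0 either a >= N or b >= N.  Taking a = b = 0 and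
   m = 2N, the operator X^(2N) has finite rank. *)

Section LinearMaps.
Variables (k : fieldType) (V : lmodType k).
Implicit Types (f : V -> V) (u v : V).

Lemma linear_funB f : linear f -> forall u v, f (u - v) = f u - f v.
Proof. exact: zmod_morphism_linear. Qed.

Lemma linear_fun0 f : linear f -> f 0 = 0.
Proof. by move=> hf; rewrite -[X in f X](subrr 0) (linear_funB hf) subrr. Qed.

Lemma linear_funD f : linear f -> forall u v, f (u + v) = f u + f v.
Proof. by move=> hf u v; have := hf 1 u v; rewrite !scale1r. Qed.

Lemma linear_iter f n : linear f -> linear (iter n f).
Proof. by move=> hf; elim: n => [|n IHn] a u v //=; rewrite IHn hf. Qed.

End LinearMaps.

Section FiniteSpan.
Variables (k : fieldType) (V : lmodType k).
Implicit Types (s t : seq V) (u v : V).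

(* A recursive form of [in_span], convenient for induction on the family. *)
Fixpoint lin_comb s v : Prop :=
  if s is x :: s' then exists a, lin_comb s' (v - a *: x) else v = 0.

Lemma lin_comb0 s : lin_comb s 0.
Proof. by elim: s => [|x s IHs] //=; exists 0; rewrite scale0r subr0. Qed.

Lemma lin_combD s u v : lin_comb s u -> lin_comb s v -> lin_comb s (u + v).
Proof.
elim: s u v => [|x s IHs] u v /=; first by move=> -> ->; rewrite addr0.
move=> [a hu] [b hv]; exists (a + b).
by rewrite scalerDl opprD addrACA; apply: IHs.
Qed.

Lemma lin_combZ s c v : lin_comb s v -> lin_comb s (c *: v).
Proof.
elim: s v => [|x s IHs] v /=; first by move=> ->; rewrite scaler0.
by move=> [a hv]; exists (c * a); rewrite -scalerA -scalerBr; apply: IHs.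
Qed.

Lemma lin_combN s v : lin_comb s v -> lin_comb s (- v).
Proof. by rewrite -scaleN1r; apply: lin_combZ. Qed.

Lemma lin_combB s u v : lin_comb s u -> lin_comb s v -> lin_comb s (u - v).
Proof. by move=> hu /lin_combN; apply: lin_combD. Qed.

Lemma lin_comb_cat s t u v : lin_comb s u -> lin_comb t v -> lin_comb (s ++ t) (u + v).
Proof.
elim: s u => [|x s IHs] u /=; first by move=> ->; rewrite add0r.
by move=> [a hu] hv; exists a; rewrite addrAC; apply: IHs.
Qed.

Lemma lin_comb_map (f : V -> V) s v :
  linear f -> lin_comb s v -> lin_comb (map f s) (f v).
Proof.
move=> hf; elim: s v => [|x s IHs] v /=; first by move=> ->; rewrite linear_fun0.
move=> [a hv]; exists a.
by rewrite -(scalable_linear hf) -(linear_funB hf); apply: IHs.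
Qed.

Lemma in_spanP s v : in_span s v <-> lin_comb s v.
Proof.
elim: s v => [|x s IHs] v /=.
  split=> [[c ->]|->]; first by rewrite big_ord0.
  by exists (fun _ => 0); rewrite big_ord0.
split=> [[c ->]|[a /IHs [c hc]]].
  exists (c ord0); apply/IHs; exists (fun i => c (lift ord0 i)).
  by rewrite big_ord_recl addrAC subrr add0r.
exists (fun i => oapp c a (unlift ord0 i)).
rewrite big_ord_recl unlift_none -[v](subrK (a *: x)) hc addrC /=.
by congr (_ + _); apply: eq_bigr => i _; rewrite liftK.
Qed.

(* Induction on [s]: either every vector of [P] is already spanned by the tail of
   [s], or some [p0] in [P] is not, and then [p0] together with a spanning family of
   the subspace [P] meet [span (behead s)] spans [P]. *)
Lemma subspace_finite_span s (P : V -> Prop) :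
  P 0 -> (forall a u v, P u -> P v -> P (a *: u + v)) ->
  (forall v, P v -> lin_comb s v) -> exists t, forall v, P v <-> lin_comb t v.
Proof.
elim: s P => [|x s IHs] P P0 PP Ps.
  by exists [::] => v; split=> [/Ps|/= ->].
have [[p0 [Pp0 np0]] | all_s] := classic (exists p0, P p0 /\ ~ lin_comb s p0); last first.
  apply: IHs => // v Pv; apply: NNPP => nv; apply: all_s; by exists v.
have [b hb] := Ps p0 Pp0.
have b_neq0 : b != 0 by apply: contra_notN np0 => /eqP b0; rewrite b0 scale0r subr0 in hb.
have [t ht] : exists t, forall v, (P v /\ lin_comb s v) <-> lin_comb t v.
  apply: IHs => [|a u v [Pu su] [Pv sv]|v []] //; first by split; [|exact: lin_comb0].
  by split; [apply: PP | apply: lin_combD => //; apply: lin_combZ].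
exists (p0 :: t) => v; split=> [Pv|[c /ht [Pv _]]]; last first.
  by have := PP c p0 _ Pp0 Pv; rewrite addrC subrK.
have [a ha] := Ps v Pv; exists (a / b); apply/ht; split.
  by have := PP (- (a / b)) p0 v Pp0 Pv; rewrite scaleNr addrC.
have -> : v - (a / b) *: p0 = (v - a *: x) - (a / b) *: (p0 - b *: x).
  by rewrite scalerBr scalerA divfK // opprB addrA subrK.
by apply: lin_combB => //; apply: lin_combZ.
Qed.

End FiniteSpan.

Section FiniteRank.
Variables (k : fieldType) (V : lmodType k).
Implicit Types (f g : V -> V).

(* Weaker than [fin_dim_range]: the range is only contained in a finite span. *)
Definition finite_rank f := exists s, forall w, lin_comb s (f w).

Lemma fin_dim_range_finite_rank f : fin_dim_range f -> finite_rank f.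
Proof. by move=> [s hs]; exists s => w; apply/in_spanP/hs; exists w. Qed.

Lemma finite_rank_fin_dim_range f : linear f -> finite_rank f -> fin_dim_range f.
Proof.
move=> hf [s hs].
have [t ht] : exists t, forall v, (exists w, v = f w) <-> lin_comb t v.
  apply: (@subspace_finite_span _ _ s) => [|a _ _ [u ->] [w ->]|_ [w ->]] //.
    by exists 0; rewrite linear_fun0.
  by exists (a *: u + w); rewrite hf.
by exists t => v; rewrite in_spanP.
Qed.

Lemma eq_finite_rank f g : f =1 g -> finite_rank f -> finite_rank g.
Proof. by move=> efg [s hs]; exists s => w; rewrite -efg. Qed.

Lemma finite_rankD f g :
  finite_rank f -> finite_rank g -> finite_rank (fun v => f v + g v).
Proof. by move=> [s hs] [t ht]; exists (s ++ t) => w; apply: lin_comb_cat. Qed.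

Lemma finite_rankN f : finite_rank f -> finite_rank (fun v => - f v).
Proof. by move=> [s hs]; exists s => w; apply: lin_combN. Qed.

Lemma finite_rank_compr f g : finite_rank f -> finite_rank (f \o g).
Proof. by move=> [s hs]; exists s => w; apply: hs. Qed.

Lemma finite_rank_compl f g : linear g -> finite_rank f -> finite_rank (g \o f).
Proof. by move=> hg [s hs]; exists (map g s) => w; apply: lin_comb_map. Qed.

Lemma finite_rank_iter f n m :
  linear f -> (n <= m)%N -> finite_rank (iter n f) -> finite_rank (iter m f).
Proof.
move=> hf le_nm /(finite_rank_compl (linear_iter (m - n) hf)).
by apply: eq_finite_rank => v /=; rewrite -iterD subnK.
Qed.

End FiniteRank.

Section SumOfFinitePotent.
Variables (k : fieldType) (V : lmodType k) (A B : V -> V) (N : nat).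
Hypotheses (linA : linear A) (linB : linear B).
Hypotheses (frAN : finite_rank (iter N A)) (frBN : finite_rank (iter N B)).
Hypothesis frAB : finite_rank (fun v => A (B v) - B (A v)).

Let X v := A v + B v.

Let linX : linear X.
Proof. by move=> a u v; rewrite /X linA linB scalerDr addrACA. Qed.

Lemma finite_rank_commutator_iter m :
  finite_rank (fun v => iter m X (A v) - A (iter m X v)).
Proof.
elim: m => [|m IHm]; first by exists [::] => w /=; rewrite subrr.
have frXA : finite_rank (fun v => X (A v) - A (X v)).
  apply: eq_finite_rank (finite_rankN frAB) => v.
  by rewrite /X (linear_funD linA) opprB opprD addrACA subrr add0r.
apply: eq_finite_rank (finite_rankD (finite_rank_compl linX IHm)
                                    (finite_rank_compr (iter m X) frXA)) => v /=.
by rewrite (linear_funB linX) addrA subrK.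
Qed.

Lemma finite_rank_iter_word a b m : (N + N <= (a + b + m).+1)%N ->
  finite_rank (iter a A \o iter m X \o iter b B).
Proof.
elim: m a b => [|m IHm] a b le_2N.
  have [le_Na | lt_aN] := leqP N a.
    exact/finite_rank_compr/(finite_rank_iter linA le_Na).
  apply/(finite_rank_compl (linear_iter a linA))/(finite_rank_iter linB _ frBN).
  lia.
have fr1 := IHm a.+1 b ltac:(lia).
have fr3 := IHm a b.+1 ltac:(lia).
have fr2 := finite_rank_compl (linear_iter a linA)
              (finite_rank_compr (iter b B) (finite_rank_commutator_iter m)).
apply: eq_finite_rank (finite_rankD (finite_rankD fr1 fr2) fr3) => v /=.
rewrite -(iterS a A) -(iterS m X) (iterSr a A) (iterSr m X) /X.
have linAa := linear_iter a linA.
rewrite (linear_funB linAa) !(linear_funD (linear_iter _ linX)) (linear_funD linAa).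
by rewrite (addrC (iter a A (A _))) subrK.
Qed.

Lemma fin_dim_range_iter_add : fin_dim_range (iter (N + N) X).
Proof.
apply: finite_rank_fin_dim_range; first exact: linear_iter.
exact: (@finite_rank_iter_word 0 0 (N + N)).
Qed.

End SumOfFinitePotent.

Theorem lemma3p3 (k : fieldType) (V : lmodType k) (phi psi : {linear V -> V}) :
  finite_potent phi -> finite_potent psi ->
  fin_dim_range (fun v => phi (psi v) - psi (phi v)) ->
  finite_potent (fun v => phi v + psi v).
Proof.
move=> [n1 /fin_dim_range_finite_rank fr1] [n2 /fin_dim_range_finite_rank fr2].
move=> /fin_dim_range_finite_rank frc.
exists ((n1 + n2) + (n1 + n2)).
apply: fin_dim_range_iter_add (linearP phi) (linearP psi) _ _ frc.
- exact: finite_rank_iter (linearP phi) (leq_addr _ _) fr1.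
- exact: finite_rank_iter (linearP psi) (leq_addl _ _) fr2.
Qed.
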